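(* Let $A$ be a two-dimensional evolution algebra over a field $\mathbb{K}$ with $A^2=A$. Then: (i) if $\mathfrak{S}(A)=\mathfrak{D}_1$, there is a natural basis with structure matrix $\begin{pmatrix}1&0\\0&1\end{pmatrix}$ (the algebra $A_1$); (ii) if $\mathfrak{S}(A)=\mathfrak{D}_2$, there is a natural basis with structure matrix $\begin{pmatrix}0&\alpha\\1&0\end{pmatrix}$ for some $\alpha\in\mathbb{K}^\times$ (the algebra $A_{2,\alpha}$); (iii) if $\mathfrak{S}(A)=\mathfrak{D}_3$, there is a natural basis with structure matrix $\begin{pmatrix}1&\alpha\\0&1\end{pmatrix}$ for some $\alpha\in\mathbb{K}^\times$ (the algebra $A_{3,\alpha}$); (iv) if $\mathfrak{S}(A)=\mathfrak{D}_4$, there is a natural basis with structure matrix $\begin{pmatrix}0&1\\\alpha&1\end{pmatrix}$ for some $\alpha\in\mathbb{K}^\times$ (the algebra $A_{4,\alpha}$); (v) if $\mathfrak{S}(A)=\mathfrak{D}_5$, there is a natural basis with structure matrix $\begin{pmatrix}1&\alpha\\\beta&1\end{pmatrix}$ for some $\alpha,\beta\in\mathbb{K}^\times$ with $\alpha\beta\neq1$ (the algebra $A_{5,\alpha,\beta}$).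
   Context: An evolution algebra over $\mathbb{K}$ is a $\mathbb{K}$-algebra with a basis $\{e_i\}$ (natural basis) such that $e_ie_j=0$ for $i\neq j$. For a natural basis $B=\{e_1,e_2\}$ the structure matrix is $M_B=(\omega_{ij})$ where $e_j^2=\omega_{1j}e_1+\omega_{2j}e_2$. The pseudo-square relative to $B$ is $E_B\subseteq\{L,T,R,D\}$ with $L\in E_B$ iff $\omega_{11}\neq0$, $T\in E_B$ iff $\omega_{12}\neq0$, $R\in E_B$ iff $\omega_{22}\neq0$, $D\in E_B$ iff $\omega_{21}\neq0$; the square $\mathfrak{S}(A)$ is the set of all $E_B$ over all natural bases $B$. $\mathfrak{D}_1=\{\{L,R\}\}$, $\mathfrak{D}_2=\{\{T,D\}\}$, $\mathfrak{D}_3=\{\{L,T,R\},\{L,R,D\}\}$, $\mathfrak{D}_4=\{\{L,T,D\},\{T,R,D\}\}$, $\mathfrak{D}_5=\{\{L,T,R,D\}\}$. *)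

From HB Require Import structures.
From mathcomp Require Import all_boot all_order all_algebra.
Set Implicit Arguments.
Unset Strict Implicit.
Unset Printing Implicit Defensive.
Import GRing.Theory.
Local Open Scope ring_scope.

(* Letters for pseudo-squares: L (w11), T (w12), R (w22), D (w21). *)
Inductive letter := L | T | R | D.

Definition letter_code (x : letter) : 'I_4 :=
  match x with L => inord 0 | T => inord 1 | R => inord 2 | D => inord 3 end.
Definition letter_decode (i : 'I_4) : letter :=
  match val i with 0%N => L | 1%N => T | 2%N => R | _ => D end.
Lemma letter_codeK : cancel letter_code letter_decode.
Proof. by case; rewrite /letter_decode /= inordK. Qed.
HB.instance Definition _ := Finite.copy letter (can_type letter_codeK).

Section EvolutionAlgebras.
Variables (K : fieldType) (V : vectType K) (mul : V -> V -> V).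

Definition bilinear_mul : Prop :=
  (forall (a : K) (x y z : V), mul (a *: x + y) z = a *: mul x z + mul y z) /\
  (forall (a : K) (x y z : V), mul z (a *: x + y) = a *: mul z x + mul z y).

Definition natural_basis (e1 e2 : V) : Prop :=
  basis_of fullv [:: e1; e2] /\ mul e1 e2 = 0 /\ mul e2 e1 = 0.

Definition evolution_algebra : Prop := exists e1 e2, natural_basis e1 e2.

Definition square_full : Prop :=
  forall z : V, exists s : seq (V * V), z = \sum_(p <- s) mul p.1 p.2.

(* the structure matrix of (e1,e2) is [[w11, w12]; [w21, w22]],
   i.e. e_j^2 = w1j e1 + w2j e2 *)
Definition struct_mx (e1 e2 : V) (w11 w12 w21 w22 : K) : Prop :=
  mul e1 e1 = w11 *: e1 + w21 *: e2 /\ mul e2 e2 = w12 *: e1 + w22 *: e2.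

Definition pseudo_square (w11 w12 w21 w22 : K) : {set letter} :=
  [set x | match x with
           | L => w11 != 0 | T => w12 != 0 | R => w22 != 0 | D => w21 != 0 end].

Definition in_square (E : {set letter}) : Prop :=
  exists e1 e2 w11 w12 w21 w22, natural_basis e1 e2 /\
    struct_mx e1 e2 w11 w12 w21 w22 /\ E = pseudo_square w11 w12 w21 w22.

Definition square_is (F : {set {set letter}}) : Prop :=
  forall E, in_square E <-> E \in F.

End EvolutionAlgebras.

Definition D1 : {set {set letter}} := [set [set L; R]].
Definition D2 : {set {set letter}} := [set [set T; D]].
Definition D3 : {set {set letter}} := [set [set L; T; R]; [set L; R; D]].
Definition D4 : {set {set letter}} := [set [set L; T; D]; [set T; R; D]].
Definition D5 : {set {set letter}} := [set [set L; T; R; D]].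

From HB Require Import structures.
From mathcomp Require Import all_boot all_order all_algebra.
From mathcomp Require Import ring.
Set Implicit Arguments.
Unset Strict Implicit.
Import GRing.Theory.
Local Open Scope ring_scope.

(* Rescaling a natural basis (e1, e2) to (c e1, d e2) keeps it natural and
   changes the structure matrix by w11 -> c w11, w12 -> d^2 w12 / c,
   w21 -> c^2 w21 / d, w22 -> d w22, while swapping e1 and e2 flips the matrix
   along both diagonals. The pseudo-square of one natural basis fixes which
   entries vanish, and suitable c, d then normalize the nonzero ones. In the
   case D5 the relation a b <> 1 is the determinant of the structure matrix,
   which cannot vanish: otherwise e2^2 would be a multiple of e1^2 and every
   product would lie on the line spanned by e1^2, contradicting A^2 = A. *)

Lemma letter_eqE (x y : letter) : (x == y) =
  match x, y with L, L | T, T | R, R | D, D => true | _, _ => false end.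
Proof. by case: x; case: y; rewrite ?eqxx //; apply/eqP. Qed.

Lemma pseudo_square_eqP (K : fieldType) (w11 w12 w21 w22 : K) E :
  pseudo_square w11 w12 w21 w22 = E ->
  [/\ (w11 != 0) = (L \in E), (w12 != 0) = (T \in E),
      (w21 != 0) = (D \in E) & (w22 != 0) = (R \in E)].
Proof. by move=> <-; rewrite !inE. Qed.

Section BasisOfTwo.
Variables (K : fieldType) (V : vectType K).

Lemma basis_coords (U : {vspace V}) (e1 e2 x : V) :
  basis_of U [:: e1; e2] -> x \in U -> exists a b, x = a *: e1 + b *: e2.
Proof.
move=> /span_basis <-; rewrite span_cons span_seq1.
by case/memv_addP=> _ /vlineP [a ->] [_ /vlineP [b ->] ->]; exists a, b.
Qed.

Lemma basis_ofZ (U : {vspace V}) (e1 e2 : V) (c d : K) : c != 0 -> d != 0 ->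
  basis_of U [:: e1; e2] -> basis_of U [:: c *: e1; d *: e2].
Proof.
move=> c0 d0; rewrite !basisEdim => /andP [sUe ->]; rewrite andbT.
apply: subv_trans sUe _; apply/span_subvP => x; rewrite !inE => /orP [] /eqP ->.
  by rewrite -{1}(scalerK c0 e1) memvZ // memv_span // !inE eqxx.
by rewrite -{1}(scalerK d0 e2) memvZ // memv_span // !inE eqxx orbT.
Qed.

End BasisOfTwo.

Section NaturalBases.
Variables (K : fieldType) (V : vectType K) (mul : V -> V -> V).
Hypothesis mul_bilinear : bilinear_mul mul.

Lemma bmulDl x y z : mul (x + y) z = mul x z + mul y z.
Proof. by case: mul_bilinear => linl _; have := linl 1 x y z; rewrite !scale1r. Qed.

Lemma bmulDr x y z : mul z (x + y) = mul z x + mul z y.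
Proof. by case: mul_bilinear => _ linr; have := linr 1 x y z; rewrite !scale1r. Qed.

Lemma bmul0l z : mul 0 z = 0.
Proof. by apply: (addrI (mul 0 z)); rewrite -bmulDl !addr0. Qed.

Lemma bmul0r z : mul z 0 = 0.
Proof. by apply: (addrI (mul z 0)); rewrite -bmulDr !addr0. Qed.

Lemma bmulZl a x z : mul (a *: x) z = a *: mul x z.
Proof. by case: mul_bilinear => linl _; have := linl a x 0 z; rewrite addr0 bmul0l addr0. Qed.

Lemma bmulZr a x z : mul z (a *: x) = a *: mul z x.
Proof. by case: mul_bilinear => _ linr; have := linr a x 0 z; rewrite addr0 bmul0r addr0. Qed.

Lemma natural_basis_struct (e1 e2 : V) : natural_basis mul e1 e2 ->
  exists w11 w12 w21 w22, struct_mx mul e1 e2 w11 w12 w21 w22.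
Proof.
case=> Be _; have [w11 [w21 E1]] := basis_coords Be (memvf (mul e1 e1)).
by have [w12 [w22 E2]] := basis_coords Be (memvf (mul e2 e2)); exists w11, w12, w21, w22.
Qed.

Lemma natural_basisZ (e1 e2 : V) (c d : K) : c != 0 -> d != 0 ->
  natural_basis mul e1 e2 -> natural_basis mul (c *: e1) (d *: e2).
Proof.
move=> c0 d0 [Be [m12 m21]]; split; first exact: basis_ofZ.
by rewrite !bmulZl !bmulZr m12 m21 !scaler0.
Qed.

Lemma natural_basis_swap (e1 e2 : V) :
  natural_basis mul e1 e2 -> natural_basis mul e2 e1.
Proof.
case=> Be [m12 m21]; split=> //.
by rewrite (perm_basis _ (permEl (perm_catC [:: e2] [:: e1]))).
Qed.

Lemma struct_mxZ (e1 e2 : V) (c d w11 w12 w21 w22 : K) : c != 0 -> d != 0 ->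
  struct_mx mul e1 e2 w11 w12 w21 w22 ->
  struct_mx mul (c *: e1) (d *: e2)
    (c * w11) (d ^+ 2 * w12 / c) (c ^+ 2 * w21 / d) (d * w22).
Proof.
move=> c0 d0 [E1 E2]; split; rewrite !bmulZl !bmulZr ?E1 ?E2 !scalerDr !scalerA;
  by congr (_ *: _ + _ *: _); field.
Qed.

Lemma struct_mx_swap (e1 e2 : V) (w11 w12 w21 w22 : K) :
  struct_mx mul e1 e2 w11 w12 w21 w22 -> struct_mx mul e2 e1 w22 w21 w12 w11.
Proof. by case=> E1 E2; split; rewrite addrC. Qed.

Lemma natural_mul_in_squares (e1 e2 x y : V) : natural_basis mul e1 e2 ->
  mul x y \in (<[mul e1 e1]> + <[mul e2 e2]>)%VS.
Proof.
case=> Be [m12 m21].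
have [a [b ->]] := basis_coords Be (memvf x).
have [c [d ->]] := basis_coords Be (memvf y).
rewrite !bmulDl !bmulDr !bmulZl !bmulZr m12 m21 !scaler0 addr0 add0r.
by rewrite memv_add ?memvZ ?memv_line.
Qed.

Lemma square_full_squares_span (e1 e2 : V) : square_full mul ->
  natural_basis mul e1 e2 -> (<[mul e1 e1]> + <[mul e2 e2]>)%VS = fullv.
Proof.
move=> A2 nb; apply/eqP; rewrite eqEsubv subvf /=; apply/subvP => z _.
by have [s ->] := A2 z; apply: memv_suml => p _; apply: natural_mul_in_squares.
Qed.

Definition natural_struct (w11 w12 w21 w22 : K) : Prop :=
  exists e1 e2, natural_basis mul e1 e2 /\ struct_mx mul e1 e2 w11 w12 w21 w22.

Lemma natural_structZ (c d w11 w12 w21 w22 v11 v12 v21 v22 : K) :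
  c != 0 -> d != 0 -> natural_struct w11 w12 w21 w22 ->
  v11 = c * w11 -> v12 = d ^+ 2 * w12 / c -> v21 = c ^+ 2 * w21 / d ->
  v22 = d * w22 -> natural_struct v11 v12 v21 v22.
Proof.
move=> c0 d0 [e1 [e2 [nb sm]]] -> -> -> ->.
by exists (c *: e1), (d *: e2); split; [apply: natural_basisZ | apply: struct_mxZ].
Qed.

Lemma natural_struct_swap (w11 w12 w21 w22 : K) :
  natural_struct w11 w12 w21 w22 -> natural_struct w22 w21 w12 w11.
Proof.
case=> e1 [e2 [nb sm]]; exists e2, e1.
by split; [apply: natural_basis_swap | apply: struct_mx_swap].
Qed.

Lemma natural_struct_det_neq0 (w11 w12 w21 w22 : K) : square_full mul ->
  natural_struct w11 w12 w21 w22 -> w11 != 0 -> w11 * w22 != w12 * w21.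
Proof.
move=> A2 [e1 [e2 [nb [E1 E2]]]] n11; apply/eqP => det.
have E2E1 : mul e2 e2 = (w12 / w11) *: mul e1 e1.
  rewrite E1 E2 scalerDr !scalerA; congr (_ *: _ + _ *: _); first by field.
  by rewrite mulrAC -det mulrAC divff // mul1r.
have : (fullv <= <[mul e1 e1]>)%VS.
  rewrite -(square_full_squares_span A2 nb) subv_add subvv /= E2E1.
  by rewrite -memvE memvZ // memv_line.
move/dimvS; rewrite dim_vline (size_basis (X := [tuple e1; e2]) nb.1).
by case: (_ != 0).
Qed.

Lemma natural_struct_unit_diag (w11 w12 w21 w22 : K) : w11 != 0 -> w22 != 0 ->
  natural_struct w11 w12 w21 w22 ->
  natural_struct 1 (w11 * w12 / w22 ^+ 2) (w22 * w21 / w11 ^+ 2) 1.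
Proof.
move=> n11 n22 /(natural_structZ (c := w11^-1) (d := w22^-1)).
by apply; rewrite ?invr_eq0 //; field; rewrite ?n11 ?n22 ?oner_neq0.
Qed.

Lemma natural_struct_zero_diag (w12 w21 : K) : w21 != 0 ->
  natural_struct 0 w12 w21 0 -> natural_struct 0 (w21 ^+ 2 * w12) 1 0.
Proof.
move=> n21 /(natural_structZ (c := 1) (d := w21)).
by apply; rewrite ?oner_eq0 //; field; rewrite ?n21 ?oner_neq0.
Qed.

Lemma natural_struct_zero_w11 (w12 w21 w22 : K) : w12 != 0 -> w22 != 0 ->
  natural_struct 0 w12 w21 w22 ->
  natural_struct 0 1 (w12 ^+ 2 * w21 / w22 ^+ 3) 1.
Proof.
move=> n12 n22 /(natural_structZ (c := w12 / w22 ^+ 2) (d := w22^-1)).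
by apply; rewrite ?mulf_neq0 ?invr_eq0 ?expf_neq0 //; field;
  rewrite ?n12 ?n22 ?oner_neq0.
Qed.

Lemma natural_struct_D1 (w11 w12 w21 w22 : K) :
  pseudo_square w11 w12 w21 w22 \in D1 -> natural_struct w11 w12 w21 w22 ->
  natural_struct 1 0 0 1.
Proof.
rewrite inE => /eqP /pseudo_square_eqP; rewrite !inE !letter_eqE /=.
case=> n11 /negbFE/eqP-> /negbFE/eqP-> n22 /(natural_struct_unit_diag n11 n22).
by rewrite !(mulr0, mul0r).
Qed.

Lemma natural_struct_D2 (w11 w12 w21 w22 : K) :
  pseudo_square w11 w12 w21 w22 \in D2 -> natural_struct w11 w12 w21 w22 ->
  exists2 a, a != 0 & natural_struct 0 a 1 0.
Proof.
rewrite inE => /eqP /pseudo_square_eqP; rewrite !inE !letter_eqE /=.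
case=> /negbFE/eqP-> n12 n21 /negbFE/eqP-> /(natural_struct_zero_diag n21).
by exists (w21 ^+ 2 * w12); rewrite ?mulf_neq0 ?expf_neq0.
Qed.

Lemma natural_struct_D3 (w11 w12 w21 w22 : K) :
  pseudo_square w11 w12 w21 w22 \in D3 -> natural_struct w11 w12 w21 w22 ->
  exists2 a, a != 0 & natural_struct 1 a 0 1.
Proof.
rewrite !inE => /orP [] /eqP /pseudo_square_eqP; rewrite !inE !letter_eqE /=.
  case=> n11 n12 /negbFE/eqP-> n22 /(natural_struct_unit_diag n11 n22).
  rewrite mulr0 mul0r => ?; exists (w11 * w12 / w22 ^+ 2) => //.
  by rewrite ?mulf_neq0 ?invr_eq0 ?expf_neq0.
case=> n11 /negbFE/eqP-> n21 n22.
move=> /natural_struct_swap /(natural_struct_unit_diag n22 n11).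
rewrite mulr0 mul0r => ?; exists (w22 * w21 / w11 ^+ 2) => //.
by rewrite ?mulf_neq0 ?invr_eq0 ?expf_neq0.
Qed.

Lemma natural_struct_D4 (w11 w12 w21 w22 : K) :
  pseudo_square w11 w12 w21 w22 \in D4 -> natural_struct w11 w12 w21 w22 ->
  exists2 a, a != 0 & natural_struct 0 1 a 1.
Proof.
rewrite !inE => /orP [] /eqP /pseudo_square_eqP; rewrite !inE !letter_eqE /=.
  case=> n11 n12 n21 /negbFE/eqP->.
  move=> /natural_struct_swap /(natural_struct_zero_w11 n21 n11).
  by exists (w21 ^+ 2 * w12 / w11 ^+ 3); rewrite ?mulf_neq0 ?invr_eq0 ?expf_neq0.
case=> /negbFE/eqP-> n12 n21 n22 /(natural_struct_zero_w11 n12 n22).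
by exists (w12 ^+ 2 * w21 / w22 ^+ 3); rewrite ?mulf_neq0 ?invr_eq0 ?expf_neq0.
Qed.

Lemma natural_struct_D5 (w11 w12 w21 w22 : K) : square_full mul ->
  pseudo_square w11 w12 w21 w22 \in D5 -> natural_struct w11 w12 w21 w22 ->
  exists a b, [/\ a != 0, b != 0, a * b != 1 & natural_struct 1 a b 1].
Proof.
move=> A2; rewrite inE => /eqP /pseudo_square_eqP; rewrite !inE !letter_eqE /=.
case=> n11 n12 n21 n22 Aw; have det := natural_struct_det_neq0 A2 Aw n11.
exists (w11 * w12 / w22 ^+ 2), (w22 * w21 / w11 ^+ 2).
split; rewrite ?mulf_neq0 ?invr_eq0 ?expf_neq0 //.
  apply: contraNneq det => ab1; apply/eqP.
  by rewrite -[LHS]mulr1 -ab1; field; rewrite n11 n22.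
exact: natural_struct_unit_diag.
Qed.

End NaturalBases.

Theorem lemma3p1 (K : fieldType) (V : vectType K) (mul : V -> V -> V) :
  \dim (fullv : {vspace V}) = 2%N ->
  bilinear_mul mul ->
  evolution_algebra mul ->
  square_full mul ->
  (square_is mul D1 ->
     exists e1 e2, natural_basis mul e1 e2 /\ struct_mx mul e1 e2 1 0 0 1) /\
  (square_is mul D2 ->
     exists e1 e2 (a : K), a != 0 /\
       natural_basis mul e1 e2 /\ struct_mx mul e1 e2 0 a 1 0) /\
  (square_is mul D3 ->
     exists e1 e2 (a : K), a != 0 /\
       natural_basis mul e1 e2 /\ struct_mx mul e1 e2 1 a 0 1) /\
  (square_is mul D4 ->
     exists e1 e2 (a : K), a != 0 /\
       natural_basis mul e1 e2 /\ struct_mx mul e1 e2 0 1 a 1) /\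
  (square_is mul D5 ->
     exists e1 e2 (a b : K), a != 0 /\ b != 0 /\ a * b != 1 /\
       natural_basis mul e1 e2 /\ struct_mx mul e1 e2 1 a b 1).
Proof.
move=> _ mulb [e1 [e2 nb]] A2.
have [w11 [w12 [w21 [w22 sm]]]] := natural_basis_struct nb.
have Aw : natural_struct mul w11 w12 w21 w22 by exists e1, e2.
have inS F : square_is mul F -> pseudo_square w11 w12 w21 w22 \in F.
  move/(_ (pseudo_square w11 w12 w21 w22)) => [+ _]; apply.
  by exists e1, e2, w11, w12, w21, w22.
split; first by move/inS/(natural_struct_D1 mulb)/(_ Aw).
split.
  by move/inS/(natural_struct_D2 mulb)/(_ Aw) => [a a0 [f1 [f2 ?]]]; exists f1, f2, a.
split.
  by move/inS/(natural_struct_D3 mulb)/(_ Aw) => [a a0 [f1 [f2 ?]]]; exists f1, f2, a.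
split.
  by move/inS/(natural_struct_D4 mulb)/(_ Aw) => [a a0 [f1 [f2 ?]]]; exists f1, f2, a.
move/inS/(natural_struct_D5 mulb A2)/(_ Aw) => [a [b [a0 b0 ab1 [f1 [f2 ?]]]]].
by exists f1, f2, a, b.
Qed.
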